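(* Let $\Delta$ be a simplicial complex on $[n]$ with $\dim\Delta\le n-3$, and let $U_{\bar\sigma}$ be a subspace in $L_\Delta$ for some face $\sigma$ of $\Delta$, where $\bar\sigma=[n]-\sigma$. Then the lower interval $[\hat0,U_{\bar\sigma}]$ of $L_\Delta$ is isomorphic to the intersection lattice of the diagonal arrangement $\mathcal{A}_{\mathrm{link}_\Delta\sigma}$ associated to $\mathrm{link}_\Delta\sigma$, regarded as a simplicial complex on the vertex set $\bar\sigma$ (so the arrangement lives in $\mathbb{R}^{\bar\sigma}$).
   Context: For a finite set $V$ and $S\subseteq V$, $U_S=\{u\in\mathbb{R}^V:u_i=u_j\ \forall i,j\in S\}$. For a simplicial complex $\Gamma$ on $V$, $\mathcal{A}_\Gamma=\{U_{V-F}:F\text{ facet of }\Gamma\}$ and its intersection lattice is the set of all intersections of members of $\mathcal{A}_\Gamma$ (including $\mathbb{R}^V$), ordered by reverse inclusion; $L_\Delta$ is this lattice for $\Delta$ on $[n]$. $\mathrm{link}_\Delta\sigma=\{\tau\in\Delta:\tau\cap\sigma=\emptyset,\ \tau\cup\sigma\in\Delta\}$. *)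

From Stdlib Require Import Rdefinitions.
From mathcomp Require Import all_boot.

Set Implicit Arguments.
Unset Strict Implicit.
Unset Printing Implicit Defensive.

Definition vset (V : Type) := (V -> R) -> Prop.

Definition is_complex (V : finType) (D : {set {set V}}) : Prop :=
  forall F G : {set V}, F \in D -> G \subset F -> G \in D.

Definition facet (V : finType) (D : {set {set V}}) (F : {set V}) : Prop :=
  F \in D /\ forall G : {set V}, G \in D -> F \subset G -> G = F.

Definition U (V : finType) (S : {set V}) : vset V :=
  fun u => forall i j, i \in S -> j \in S -> u i = u j.

(* Membership in the intersection lattice of A_D = { U_{V - F} : F facet of D }:
   X is the intersection of the subspaces U_{V-F} over some set Fs of facets
   (Fs = set0 gives R^V). *)
Definition in_L (V : finType) (D : {set {set V}}) (X : vset V) : Prop :=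
  exists Fs : {set {set V}},
    (forall F, F \in Fs -> facet D F) /\
    X = (fun u => forall F, F \in Fs -> U (~: F) u).

(* order of the intersection lattice: reverse inclusion *)
Definition Lle (V : Type) (X Y : vset V) : Prop := forall u, Y u -> X u.

Definition link (V : finType) (D : {set {set V}}) (s : {set V}) : {set {set V}} :=
  [set t : {set V} | [disjoint t & s] && (t :|: s \in D)].

Definition cvert (V : finType) (s : {set V}) : finType := {x : V | x \notin s}.

Definition link_on (V : finType) (D : {set {set V}}) (s : {set V})
  : {set {set cvert s}} :=
  [set t : {set cvert s} | [set val x | x in t] \in link D s].

(* Since dim D <= n - 3, every complement [~: F] of a facet has at least two
   points, so [U (~: s)] lies in [U (~: F)] only when [s] is contained in [F]:
   the elements of the lower interval are the intersections of the [U (~: F)]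
   over facets [F] containing [s].  Those facets correspond to the facets of
   the link via [F |-> F - s], and on such [U (~: F)] the coordinates in [s]
   are free.  Hence slicing with the coordinate subspace [u = 0 on s]
   identifies the lower interval with the intersection lattice of the link. *)
From Stdlib Require Import Rdefinitions.
From mathcomp Require Import all_boot.
From Stdlib Require Raxioms FunctionalExtensionality PropExtensionality.

Set Implicit Arguments.
Unset Strict Implicit.
Unset Printing Implicit Defensive.

Definition capU (V : finType) (Fs : {set {set V}}) : vset V :=
  fun u => forall F, F \in Fs -> U (~: F) u.

Lemma Lle_antisym (V : Type) (X Y : vset V) : Lle X Y -> Lle Y X -> X = Y.
Proof.
move=> leXY leYX; apply: FunctionalExtensionality.functional_extensionality => u.
by apply: PropExtensionality.propositional_extensionality; split=> [/leYX|/leXY].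
Qed.

Lemma Lle_capU_U (V : finType) (s : {set V}) (Fs : {set {set V}}) :
  (forall F, F \in Fs -> s \subset F) -> Lle (capU Fs) (U (~: s)).
Proof.
move=> sFs u Uu F /sFs; rewrite -setCS => /subsetP sF i j Fi Fj.
by apply: Uu; apply: sF.
Qed.

Lemma U_compl_subset (V : finType) (s F : {set V}) :
  1 < #|~: F| -> Lle (U (~: F)) (U (~: s)) -> s \subset F.
Proof.
move=> twoF leFs; apply/subsetP=> i si; apply/negPn/negP=> Fi.
rewrite (cardsD1 i) in_setC Fi /= add1n ltnS in twoF.
have [j] := card_gt0P twoF; rewrite !inE => /andP[ji Fj].
(* the indicator of [i] is constant (zero) off [s] but not off [F] *)
pose u x := if x == i then R1 else R0.
have Uu : U (~: s) u.
  move=> a b; rewrite !inE => sa sb.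
  have [ai bi] : a != i /\ b != i by split; [move: sa | move: sb]; apply: contraNneq => ->.
  by rewrite /u (negbTE ai) (negbTE bi).
have := leFs u Uu i j; rewrite !inE Fi => /(_ isT Fj).
by rewrite /u eqxx (negbTE ji); exact: Raxioms.R1_neq_R0.
Qed.

Section Slice.

Variables (V : finType) (s : {set V}).

Local Notation W := (cvert s).
Local Notation valW := (val : W -> V).

Definition ext0 (w : W -> R) (i : V) : R :=
  if insub i is Some x then w x else R0.

Definition slice (X : vset V) : vset W := fun w => X (ext0 w).

Lemma ext0K (w : W -> R) : ext0 w \o val = w.
Proof.
apply: FunctionalExtensionality.functional_extensionality => x /=.
by rewrite /ext0 valK.
Qed.

Lemma U_preimset (F : {set V}) (u : V -> R) :
  s \subset F -> U (~: F) u <-> U (~: (valW @^-1: F)) (u \o val).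
Proof.
move=> sF; split=> Uu.
  by move=> x y; rewrite !inE => Fx Fy; apply: Uu; rewrite inE.
move=> i j; rewrite !in_setC => Fi Fj.
have := Uu (exist _ i (contra (subsetP sF i) Fi)) (exist _ j (contra (subsetP sF j) Fj)).
by rewrite !inE; apply.
Qed.

Lemma capU_preimset (Fs : {set {set V}}) (u : V -> R) :
  (forall F, F \in Fs -> s \subset F) ->
  capU Fs u <-> capU [set valW @^-1: F | F : {set V} in Fs] (u \o val).
Proof.
move=> sFs; split=> Uu.
  by move=> _ /imsetP[F Fs_F ->]; apply/U_preimset; [apply: sFs | apply: Uu].
by move=> F Fs_F; apply/(U_preimset _ (sFs F Fs_F))/Uu; apply: imset_f.
Qed.

Lemma slice_capU (Fs : {set {set V}}) :
  (forall F, F \in Fs -> s \subset F) ->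
  slice (capU Fs) = capU [set valW @^-1: F | F : {set V} in Fs].
Proof.
move=> sFs; apply: FunctionalExtensionality.functional_extensionality => w.
apply: PropExtensionality.propositional_extensionality.
by rewrite /slice (capU_preimset _ sFs) ext0K.
Qed.

Lemma Lle_slice_capU (Fs Gs : {set {set V}}) :
  (forall F, F \in Fs -> s \subset F) -> (forall G, G \in Gs -> s \subset G) ->
  Lle (capU Fs) (capU Gs) <-> Lle (slice (capU Fs)) (slice (capU Gs)).
Proof.
move=> sFs sGs; split=> [le w | le u]; first exact: le.
rewrite (capU_preimset u sFs) (capU_preimset u sGs) -!slice_capU //.
exact: le.
Qed.

Variable D : {set {set V}}.

Lemma mem_link_on (G : {set W}) : (G \in link_on D s) = (valW @: G :|: s \in D).
Proof.
rewrite !inE; have -> // : [disjoint valW @: G & s].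
by rewrite disjoints_subset; apply/subsetP=> _ /imsetP[x _ ->]; rewrite inE (valP x).
Qed.

Lemma preimset_val_imset (G : {set W}) : valW @^-1: (valW @: G :|: s) = G.
Proof.
apply/setP=> x; rewrite !inE (mem_imset _ _ val_inj).
by rewrite (negbTE (valP x)) orbF.
Qed.

Lemma imset_val_preimset (F : {set V}) :
  s \subset F -> valW @: (valW @^-1: F) :|: s = F.
Proof.
move=> sF; apply/setP=> i; rewrite !inE.
have [si | nsi] := boolP (i \in s); first by rewrite orbT (subsetP sF).
rewrite orbF; apply/imsetP/idP=> [[x] | Fi]; first by rewrite inE => Fx ->.
by exists (exist _ i nsi); rewrite ?inE.
Qed.

Lemma facet_link_preimset (F : {set V}) :
  facet D F -> s \subset F -> facet (link_on D s) (valW @^-1: F).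
Proof.
move=> [DF maxF] sF; split; first by rewrite mem_link_on imset_val_preimset.
move=> G; rewrite mem_link_on => DG FG.
have <- : valW @: G :|: s = F.
  by apply: maxF DG _; rewrite -{1}(imset_val_preimset sF) setSU // imsetS.
by rewrite preimset_val_imset.
Qed.

Lemma facet_imset_link (G : {set W}) :
  facet (link_on D s) G -> facet D (valW @: G :|: s).
Proof.
move=> [linkG maxG]; split; first by rewrite -mem_link_on.
move=> F DF GF; have sF : s \subset F := subset_trans (subsetUr _ _) GF.
have <- : valW @^-1: F = G.
  apply: maxG; first by rewrite mem_link_on imset_val_preimset.
  by rewrite -{1}(preimset_val_imset G) preimsetS.
by rewrite imset_val_preimset.
Qed.

Hypothesis codimD : forall F, F \in D -> 1 < #|~: F|.

Lemma in_L_below (X : vset V) :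
  in_L D X -> Lle X (U (~: s)) ->
  exists2 Fs : {set {set V}},
    forall F, F \in Fs -> facet D F /\ s \subset F & X = capU Fs.
Proof.
move=> [Fs [facetFs ->]] leXs; exists Fs => // F Fs_F; split; first exact: facetFs.
have [DF _] := facetFs F Fs_F.
by apply: U_compl_subset (codimD DF) _ => u /leXs; apply.
Qed.

Lemma slice_in_L (X : vset V) :
  in_L D X -> Lle X (U (~: s)) -> in_L (link_on D s) (slice X).
Proof.
move=> LX /(in_L_below LX)[Fs facetFs ->].
rewrite slice_capU => [|F /facetFs[] //].
exists [set valW @^-1: F | F : {set V} in Fs]; split=> // _ /imsetP[F /facetFs[fF sF] ->].
exact: facet_link_preimset.
Qed.

Lemma slice_onto (Y : vset W) :
  in_L (link_on D s) Y -> exists X, [/\ in_L D X, Lle X (U (~: s)) & slice X = Y].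
Proof.
move=> [Gs [facetGs ->]].
set Fs := [set valW @: G :|: s | G : {set W} in Gs].
have sFs F : F \in Fs -> s \subset F by move=> /imsetP[G _ ->]; apply: subsetUr.
exists (capU Fs); split; last 1 first.
- by rewrite slice_capU // -imset_comp (eq_imset _ preimset_val_imset) imset_id.
- by exists Fs; split=> // _ /imsetP[G /facetGs fG ->]; apply: facet_imset_link.
- exact: Lle_capU_U.
Qed.

Lemma Lle_slice (X Y : vset V) :
  in_L D X -> Lle X (U (~: s)) -> in_L D Y -> Lle Y (U (~: s)) ->
  Lle X Y <-> Lle (slice X) (slice Y).
Proof.
move=> LX /(in_L_below LX)[Fs facetFs ->] LY /(in_L_below LY)[Gs facetGs ->].
by apply: Lle_slice_capU => [F /facetFs[] | G /facetGs[]].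
Qed.

Lemma slice_inj (X Y : vset V) :
  in_L D X -> Lle X (U (~: s)) -> in_L D Y -> Lle Y (U (~: s)) ->
  slice X = slice Y -> X = Y.
Proof.
move=> LX leX LY leY eXY.
apply: Lle_antisym.
- by apply/(Lle_slice LX leX LY leY); rewrite eXY.
- by apply/(Lle_slice LY leY LX leX); rewrite eXY.
Qed.

End Slice.

Theorem lemma4p5 (n : nat) (D : {set {set 'I_n}}) (s : {set 'I_n}) :
  is_complex D ->
  (* dim D <= n - 3, i.e. every face F has |F| - 1 <= n - 3 *)
  (forall F, F \in D -> #|F| + 2 <= n) ->
  s \in D ->
  in_L D (U (~: s)) ->
  (* the lower interval [0^, U_{sbar}] of L_D is isomorphic to L_{A_{link_D s}} *)
  exists f : vset 'I_n -> vset (cvert s),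
    (forall X, in_L D X -> Lle X (U (~: s)) -> in_L (link_on D s) (f X)) /\
    (forall Y, in_L (link_on D s) Y ->
       exists X, [/\ in_L D X, Lle X (U (~: s)) & f X = Y]) /\
    (forall X Y, in_L D X -> Lle X (U (~: s)) ->
                 in_L D Y -> Lle Y (U (~: s)) -> f X = f Y -> X = Y) /\
    (forall X Y, in_L D X -> Lle X (U (~: s)) ->
                 in_L D Y -> Lle Y (U (~: s)) ->
                 (Lle X Y <-> Lle (f X) (f Y))).
Proof.
move=> _ dimD _ _.
have codimD F : F \in D -> 1 < #|~: F|.
  by move/dimD; rewrite -[n in _ <= n]card_ord -(cardsC F) leq_add2l.
exists (@slice _ s); split; first exact: slice_in_L.
split; first exact: slice_onto.
by split; [exact: slice_inj | exact: Lle_slice].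
Qed.
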